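(* Let $d>k>1$. For any ground-truth heads $\mathbf{w}_{\ast,1},\dots,\mathbf{w}_{\ast,M}\in\mathbb{R}^k$, any full-rank $\mathbf{B}_0\in\mathbb{R}^{d\times k}$, any initial head $\mathbf{w}_0\in\mathbb{R}^k$, any $\delta_0\in(0,1/2]$, any step size $\alpha>0$ and any number of rounds $T$, there exists $\mathbf{B}_\ast\in\mathbb{R}^{d\times k}$ with orthonormal columns such that $\operatorname{dist}(\mathbf{B}_0,\mathbf{B}_\ast)=\delta_0$, $\mathbf{B}_\ast\bar{\mathbf{w}}_\ast\in\operatorname{col}(\mathbf{B}_0)$, and $\operatorname{dist}(\mathbf{B}_T^{\mathrm{D\text{-}GD}},\mathbf{B}_\ast)\ge 0.7\,\delta_0$, where $\mathbf{B}_T^{\mathrm{D\text{-}GD}}$ is the representation produced after $T$ rounds of D-GD with step size $\alpha$ from $(\mathbf{B}_0,\mathbf{w}_0)$ in the system with ground-truth representation $\mathbf{B}_\ast$ and heads $\{\mathbf{w}_{\ast,i}\}$.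
   Context: Client $i$'s population loss is $f_i(\mathbf{B},\mathbf{w})=\tfrac12\|\mathbf{B}\mathbf{w}-\mathbf{B}_\ast\mathbf{w}_{\ast,i}\|_2^2$; $\bar{\mathbf{w}}_\ast=\frac1M\sum_i\mathbf{w}_{\ast,i}$. D-GD (distributed gradient descent, i.e. FedAvg with one local step and all clients participating) on $\frac1M\sum_i f_i$: $\mathbf{B}_{t+1}=\mathbf{B}_t-\alpha(\mathbf{B}_t\mathbf{w}_t-\mathbf{B}_\ast\bar{\mathbf{w}}_\ast)\mathbf{w}_t^\top$, $\mathbf{w}_{t+1}=\mathbf{w}_t-\alpha\mathbf{B}_t^\top(\mathbf{B}_t\mathbf{w}_t-\mathbf{B}_\ast\bar{\mathbf{w}}_\ast)$. Principal angle distance: for full-rank $\mathbf{B}_1,\mathbf{B}_2\in\mathbb{R}^{d\times k}$, $\operatorname{dist}(\mathbf{B}_1,\mathbf{B}_2)=\|\bar{\mathbf{B}}_{1,\perp}^\top\bar{\mathbf{B}}_2\|_2$, where the columns of $\bar{\mathbf{B}}_{1,\perp}$ and $\bar{\mathbf{B}}_2$ are orthonormal bases of $\operatorname{col}(\mathbf{B}_1)^\perp$ and $\operatorname{col}(\mathbf{B}_2)$. *)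

From mathcomp Require Import all_boot all_order all_algebra.
From mathcomp Require Import boolp classical_sets reals.
Set Implicit Arguments. Unset Strict Implicit. Unset Printing Implicit Defensive.
Import Order.TTheory GRing.Theory Num.Theory.
Local Open Scope ring_scope.
Local Open Scope classical_set_scope.

Section Defs.
Variable R : realType.

Definition vnorm n (x : 'cV[R]_n) : R := Num.sqrt (\sum_i (x i ord0) ^+ 2).

Definition specnorm m n (A : 'M[R]_(m, n)) : R :=
  sup [set y | exists x : 'cV[R]_n, vnorm x = 1 /\ y = vnorm (A *m x)].

Definition orthonormal_cols d n (U : 'M[R]_(d, n)) : Prop := U^T *m U = 1%:M.

(* Column spaces are represented in mxalgebra as row spaces of transposes;
   col(B1)^perp = { u | u^T B1 = 0 } is the row space of kermx B1. *)
Definition pa_dist_val d k (B1 B2 : 'M[R]_(d, k)) (r : R) : Prop :=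
  exists (n m : nat) (U : 'M[R]_(d, n)) (V : 'M[R]_(d, m)),
    [/\ orthonormal_cols U, (U^T :=: kermx B1)%MS,
        orthonormal_cols V, (V^T :=: B2^T)%MS
      & r = specnorm (U^T *m V)].

(* Principal angle distance (independent of the chosen bases). *)
Definition pa_dist d k (B1 B2 : 'M[R]_(d, k)) : R :=
  xget 0 [set r | pa_dist_val B1 B2 r].

(* One D-GD step on (1/M) sum_i f_i; target = B_* wbar_*. *)
Definition dgd_step d k (alpha : R) (target : 'cV[R]_d)
    (p : 'M[R]_(d, k) * 'cV[R]_k) : 'M[R]_(d, k) * 'cV[R]_k :=
  let: (B, w) := p in
  let res := B *m w - target in
  (B - alpha *: (res *m w^T), w - alpha *: (B^T *m res)).

Definition dgd_B d k (alpha : R) (Bstar : 'M[R]_(d, k)) (wbar : 'cV[R]_k)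
    (B0 : 'M[R]_(d, k)) (w0 : 'cV[R]_k) (T : nat) : 'M[R]_(d, k) :=
  (iter T (dgd_step alpha (Bstar *m wbar)) (B0, w0)).1.

Definition avg_head k M (ws : 'I_M -> 'cV[R]_k) : 'cV[R]_k :=
  (M%:R)^-1 *: \sum_(i < M) ws i.

End Defs.

From mathcomp Require Import all_boot all_order all_algebra.
From mathcomp Require Import boolp classical_sets reals.
From mathcomp Require Import lra.
Import Order.TTheory GRing.Theory Num.Theory.
Local Open Scope ring_scope.
Set Implicit Arguments. Unset Strict Implicit. Unset Printing Implicit Defensive.

(* Pick a unit vector f orthogonal to col(B0) (possible since k < d) and a unit
   vector u orthogonal to wbar (possible since k > 1).  Starting from an
   orthonormal basis E of col(B0), tilt its u-direction towards f by the angle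
   whose sine is delta0: Bstar := E (I + (cos - 1) u u^T) + delta0 f u^T.  Then
   Bstar has orthonormal columns, dist(B0, Bstar) = delta0, and
   Bstar wbar = E wbar lies in col(B0).  Moreover f^T (Bstar wbar) = 0, so every
   D-GD update of B is orthogonal to f; hence f^T B_T = 0 for all T, and
   f alone witnesses dist(B_T, Bstar) >= delta0. *)

Section Euclidean.
Variable R : realType.

Definition dot n (x y : 'cV[R]_n) : R := (x^T *m y) 0 0.

Lemma dotE n (x y : 'cV[R]_n) : dot x y = \sum_i x i 0 * y i 0.
Proof. by rewrite /dot !mxE; apply: eq_bigr => i _; rewrite mxE. Qed.

Lemma dotC n (x y : 'cV[R]_n) : dot x y = dot y x.
Proof. by rewrite !dotE; apply: eq_bigr => i _; rewrite mulrC. Qed.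

Lemma dotDl n (x y z : 'cV[R]_n) : dot (x + y) z = dot x z + dot y z.
Proof. by rewrite !dotE -big_split; apply: eq_bigr => i _; rewrite mxE mulrDl. Qed.

Lemma dotDr n (x y z : 'cV[R]_n) : dot z (x + y) = dot z x + dot z y.
Proof. by rewrite dotC dotDl !(dotC z). Qed.

Lemma dotZl n a (x y : 'cV[R]_n) : dot (a *: x) y = a * dot x y.
Proof. by rewrite !dotE mulr_sumr; apply: eq_bigr => i _; rewrite mxE mulrA. Qed.

Lemma dotZr n a (x y : 'cV[R]_n) : dot x (a *: y) = a * dot x y.
Proof. by rewrite dotC dotZl dotC. Qed.

Lemma dotNl n (x y : 'cV[R]_n) : dot (- x) y = - dot x y.
Proof. by rewrite -scaleN1r dotZl mulN1r. Qed.

Lemma dotNr n (x y : 'cV[R]_n) : dot x (- y) = - dot x y.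
Proof. by rewrite -scaleN1r dotZr mulN1r. Qed.

Lemma dotMl m n (A : 'M[R]_(m, n)) x y : dot (A *m x) y = dot x (A^T *m y).
Proof. by rewrite /dot trmx_mul mulmxA. Qed.

Lemma dotxx_ge0 n (x : 'cV[R]_n) : 0 <= dot x x.
Proof. by rewrite dotE; apply: sumr_ge0 => i _; rewrite -expr2 sqr_ge0. Qed.

Lemma dotxx_eq0 n (x : 'cV[R]_n) : dot x x = 0 -> x = 0.
Proof.
rewrite dotE => /eqP; rewrite psumr_eq0 => [/allP x0|i _]; last by rewrite -expr2 sqr_ge0.
apply/matrixP => i j; rewrite ord1 mxE.
by have := x0 i (mem_index_enum i); rewrite /= -expr2 sqrf_eq0 => /eqP.
Qed.

Lemma trmx_mul_dot n (x y : 'cV[R]_n) : x^T *m y = (dot x y)%:M.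
Proof. by apply/matrixP => i j; rewrite !ord1 [RHS]mxE eqxx mulr1n. Qed.

Lemma vnormE n (x : 'cV[R]_n) : vnorm x = Num.sqrt (dot x x).
Proof. by rewrite /vnorm dotE; congr Num.sqrt; apply: eq_bigr => i _; rewrite expr2. Qed.

Lemma vnorm_ge0 n (x : 'cV[R]_n) : 0 <= vnorm x.
Proof. by rewrite vnormE sqrtr_ge0. Qed.

Lemma vnormZ n a (x : 'cV[R]_n) : vnorm (a *: x) = `|a| * vnorm x.
Proof. by rewrite !vnormE dotZl dotZr mulrA -expr2 sqrtrM ?sqr_ge0 // sqrtr_sqr. Qed.

Lemma vnorm_unit n (x : 'cV[R]_n) : dot x x = 1 -> vnorm x = 1.
Proof. by move=> x1; rewrite vnormE x1 sqrtr1. Qed.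

Lemma vnorm_orthonormal_mul d n (U : 'M[R]_(d, n)) x :
  orthonormal_cols U -> vnorm (U *m x) = vnorm x.
Proof. by move=> hU; rewrite !vnormE dotMl mulmxA hU mul1mx. Qed.

Lemma normr_dot_le n (a b : 'cV[R]_n) : vnorm b = 1 -> `|dot a b| <= vnorm a.
Proof.
move=> b1; have bb1 : dot b b = 1 by rewrite -[LHS]sqr_sqrtr ?dotxx_ge0 // -vnormE b1 expr1n.
set t := dot a b.
(* 0 <= |a - t b|^2 = |a|^2 - t^2 *)
have := dotxx_ge0 (a - t *: b).
rewrite dotDl !dotDr !dotNl !dotNr !dotZl !dotZr bb1 (dotC b a) -/t => h.
rewrite -(ler_pXn2r (n:=2)) ?nnegrE ?normr_ge0 ?vnorm_ge0 // real_normK ?num_real //.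
by rewrite vnormE sqr_sqrtr ?dotxx_ge0 //; lra.
Qed.

Lemma vnorm_trmx_mul_le d n (U : 'M[R]_(d, n)) z :
  orthonormal_cols U -> vnorm (U^T *m z) <= vnorm z.
Proof.
move=> hU; rewrite !vnormE ler_sqrt ?dotxx_ge0 //.
set p := U *m (U^T *m z).
have pz : dot p z = dot (U^T *m z) (U^T *m z) by rewrite /p dotMl.
have pp : dot p p = dot (U^T *m z) (U^T *m z) by rewrite {1}/p dotMl /p mulmxA hU mul1mx.
have := dotxx_ge0 (z - p).
by rewrite dotDl !dotDr !dotNl !dotNr (dotC z p) pz pp; lra.
Qed.

End Euclidean.

Section GramSchmidt.
Variable R : realType.

Lemma orthonormal_rows_col_mx p d (a : 'rV[R]_d) (A : 'M[R]_(p, d)) :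
  (exists r (Q : 'M[R]_(r, d)), Q *m Q^T = 1%:M /\ (Q :=: A)%MS) ->
  exists r (Q : 'M[R]_(r, d)), Q *m Q^T = 1%:M /\ (Q :=: col_mx a A)%MS.
Proof.
move=> [r [Q [QQ1 eqQA]]].
have sAaA : (A <= col_mx a A)%MS by rewrite -addsmxE addsmxSr.
have sQaA : (Q <= col_mx a A)%MS by rewrite eqQA.
set a' := a - a *m Q^T *m Q.
have a'Q : a' *m Q^T = 0 by rewrite /a' mulmxBl -!mulmxA QQ1 mulmx1 subrr.
have [a'0 | a'n0] := eqVneq a' 0.
  exists r, Q; split=> //; apply/eqmxP/andP; split=> //.
  rewrite col_mx_sub -eqQA submx_refl andbT.
  have -> : a = a *m Q^T *m Q by apply/eqP; rewrite -subr_eq0 -/a' a'0.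
  exact: submxMl.
set n2 := dot a'^T a'^T.
have n2_gt0 : 0 < n2.
  rewrite lt_def dotxx_ge0 andbT; apply/eqP => /dotxx_eq0 /eqP.
  by rewrite trmx_eq0 (negPf a'n0).
set q := (Num.sqrt n2)^-1 *: a'.
have qQ : q *m Q^T = 0 by rewrite /q -scalemxAl a'Q scaler0.
have qq : q *m q^T = 1%:M.
  rewrite /q linearZ /= -scalemxAl -scalemxAr scalerA -invfM -expr2.
  have -> : a' *m a'^T = n2%:M by rewrite -trmx_mul_dot trmxK.
  by rewrite sqr_sqrtr ?ltW // scale_scalar_mx mulVf ?gt_eqF.
exists (1 + r)%N, (col_mx q Q); split.
  rewrite tr_col_mx mul_col_row qQ qq QQ1 -[Q *m q^T]trmxK trmx_mul trmxK qQ trmx0.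
  by rewrite (scalar_mx_block 1 r).
have sQqQ : (Q <= col_mx q Q)%MS by rewrite -addsmxE addsmxSr.
apply/eqmxP/andP; split; rewrite !col_mx_sub; apply/andP; split.
- have saaA : (a <= col_mx a A)%MS by rewrite -addsmxE addsmxSl.
  rewrite /q scalemx_sub // addmx_sub // -scaleN1r scalemx_sub //.
  exact: submx_trans (submxMl _ _) sQaA.
- exact: sQaA.
- have -> : a = Num.sqrt n2 *: q + a *m Q^T *m Q.
    by rewrite /q scalerA divff ?scale1r ?subrK // gt_eqF // sqrtr_gt0.
  rewrite addmx_sub // ?(submx_trans (submxMl _ _) sQqQ) //.
  by rewrite scalemx_sub // -addsmxE addsmxSl.
- by rewrite -eqQA.
Qed.

Lemma exists_orthonormal_rows p d (A : 'M[R]_(p, d)) :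
  exists r (Q : 'M[R]_(r, d)), Q *m Q^T = 1%:M /\ (Q :=: A)%MS.
Proof.
elim: p A => [|p IHp] A.
  exists 0%N, 0; split; first by rewrite [LHS]flatmx0 [RHS]flatmx0.
  by rewrite [A]flatmx0.
have A_split := vsubmxK (A : 'M_(1 + p, d)).
by rewrite -A_split; apply/orthonormal_rows_col_mx/IHp.
Qed.

Lemma rank_orthonormal_rows r d (Q : 'M[R]_(r, d)) : Q *m Q^T = 1%:M -> \rank Q = r.
Proof.
move=> QQ1; apply/eqP; rewrite eqn_leq rank_leq_row /=.
by rewrite -{1}(mxrank1 R r) -QQ1 mxrankM_maxl.
Qed.

Lemma exists_orthonormal_kermx d k (B : 'M[R]_(d, k)) :
  exists n (U : 'M[R]_(d, n)), orthonormal_cols U /\ (U^T :=: kermx B)%MS.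
Proof.
have [r [Q [QQ1 eqQ]]] := exists_orthonormal_rows (kermx B).
by exists r, Q^T; rewrite /orthonormal_cols trmxK.
Qed.

Lemma exists_unit_orthogonal d k (A : 'M[R]_(d, k)) : (\rank A < d)%N ->
  exists f : 'cV[R]_d, dot f f = 1 /\ f^T *m A = 0.
Proof.
move=> rkA; have [n [U [hU eqU]]] := exists_orthonormal_kermx A.
have n_gt0 : (0 < n)%N.
  rewrite -(rank_orthonormal_rows (Q := U^T)) ?trmxK // eqU mxrank_ker.
  by rewrite subn_gt0.
exists (row (Ordinal n_gt0) U^T)^T; split.
  rewrite /dot trmxK !rowE trmx_mul -mulmxA (mulmxA U^T) trmxK hU mul1mx.
  by rewrite trmx_delta mul_delta_mx mxE !eqxx.
have /sub_kermxP UA : (U^T <= kermx A)%MS by rewrite eqU.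
by rewrite trmxK -row_mul UA row0.
Qed.

Lemma exists_orthonormal_col_basis d k (B : 'M[R]_(d, k)) : \rank B = k ->
  exists G : 'M[R]_k, orthonormal_cols (B *m G).
Proof.
move=> rkB; have [r [Q [QQ1 eqQ]]] := exists_orthonormal_rows B^T.
have r_k : r = k by rewrite -(rank_orthonormal_rows QQ1) eqQ mxrank_tr.
subst r; have /submxP [G QG] : (Q <= B^T)%MS by rewrite eqQ.
exists G^T; have -> : B *m G^T = Q^T by rewrite QG trmx_mul trmxK.
by rewrite /orthonormal_cols trmxK.
Qed.

End GramSchmidt.

Section PrincipalAngleDistance.
Variable R : realType.

Lemma col_sub_mulmx d m k (V : 'M[R]_(d, m)) (B : 'M[R]_(d, k)) :
  (B^T <= V^T)%MS -> exists D : 'M[R]_(m, k), V *m D = B.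
Proof.
by case/submxP => D BVD; exists D^T; rewrite -[B]trmxK BVD trmx_mul trmxK.
Qed.

Lemma pa_distP d k (B1 B2 : 'M[R]_(d, k)) :
  orthonormal_cols B2 -> pa_dist_val B1 B2 (pa_dist B1 B2).
Proof.
move=> hB2; apply: (xgetPex 0 (P := [set r | pa_dist_val B1 B2 r])).
have [n [U [hU eqU]]] := exists_orthonormal_kermx B1.
by exists (specnorm (U^T *m B2)), n, k, U, B2; split.
Qed.

Lemma specnorm_ubound d n m (U : 'M[R]_(d, n)) (V : 'M[R]_(d, m)) :
  orthonormal_cols U -> orthonormal_cols V ->
  has_ubound [set y | exists x : 'cV[R]_m, vnorm x = 1 /\ y = vnorm (U^T *m V *m x)].
Proof.
move=> hU hV; exists 1 => _ [x [x1 ->]].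
by rewrite -mulmxA (le_trans (vnorm_trmx_mul_le _ hU)) // vnorm_orthonormal_mul // x1.
Qed.

Lemma pa_dist_ge d k (B1 B2 : 'M[R]_(d, k)) (f : 'cV[R]_d) (u : 'cV[R]_k) delta :
  orthonormal_cols B2 -> f^T *m B1 = 0 -> dot f f = 1 -> dot u u = 1 ->
  B2^T *m f = delta *: u -> delta <= pa_dist B1 B2.
Proof.
move=> hB2 fB1 ff1 uu1 B2f.
have [n [m [U [V [hU eqU hV eqV ->]]]]] := pa_distP B1 hB2.
have [D VD] : exists D : 'M[R]_(m, k), V *m D = B2 by apply: col_sub_mulmx; rewrite eqV.
have [g Ug] : exists g : 'M[R]_(n, 1), U *m g = f.
  by apply: col_sub_mulmx; rewrite eqU sub_kermx fB1.
have UUf : U *m (U^T *m f) = f by rewrite -Ug (mulmxA U^T) hU mul1mx.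
have Uf1 : vnorm (U^T *m f) = 1 by rewrite -(vnorm_orthonormal_mul _ hU) UUf vnorm_unit.
set x := D *m u.
have Vx : V *m x = B2 *m u by rewrite /x mulmxA VD.
have x1 : vnorm x = 1.
  by rewrite -(vnorm_orthonormal_mul _ hV) Vx vnorm_orthonormal_mul // vnorm_unit.
apply: (@le_trans _ _ (vnorm (U^T *m V *m x))); last first.
  by apply: ub_le_sup; [apply: specnorm_ubound | exists x].
have := normr_dot_le (U^T *m (V *m x)) Uf1.
rewrite dotMl trmxK UUf Vx dotMl B2f dotZr uu1 mulr1 -mulmxA Vx.
exact/le_trans/ler_norm.
Qed.

Lemma pa_dist_le d k (B1 B2 : 'M[R]_(d, k)) (f : 'cV[R]_d) (u : 'cV[R]_k)
    (G : 'M[R]_k) delta :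
  orthonormal_cols B2 -> 0 <= delta -> dot f f = 1 -> dot u u = 1 ->
  B2 = B1 *m G + delta *: (f *m u^T) -> pa_dist B1 B2 <= delta.
Proof.
move=> hB2 delta_ge0 ff1 uu1 B2E.
have [n [m [U [V [hU eqU hV eqV ->]]]]] := pa_distP B1 hB2.
have [D VD] : exists D : 'M[R]_(m, k), V *m D = B2 by apply: col_sub_mulmx; rewrite eqV.
have [D' B2D'] : exists D' : 'M[R]_(k, m), B2 *m D' = V by apply: col_sub_mulmx; rewrite eqV.
have /sub_kermxP UB1 : (U^T <= kermx B1)%MS by rewrite eqU.
apply: ge_sup.
  exists (vnorm (U^T *m V *m (D *m u))), (D *m u); split => //.
  by rewrite -(vnorm_orthonormal_mul _ hV) mulmxA VD vnorm_orthonormal_mul // vnorm_unit.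
move=> _ [x [x1 ->]].
set z := D' *m x.
have Vx : V *m x = B2 *m z by rewrite /z mulmxA B2D'.
have z1 : vnorm z = 1 by rewrite -(vnorm_orthonormal_mul _ hB2) -Vx vnorm_orthonormal_mul.
rewrite -mulmxA Vx B2E mulmxDl mulmxDr -!mulmxA (mulmxA U^T) UB1 mul0mx add0r.
rewrite -scalemxAl -scalemxAr -mulmxA trmx_mul_dot mul_mx_scalar vnormZ -scalemxAr vnormZ.
have uz : `|dot u z| <= 1 by rewrite -(vnorm_unit uu1); apply: normr_dot_le.
have Uf : vnorm (U^T *m f) <= 1 by rewrite -(vnorm_unit ff1) vnorm_trmx_mul_le.
rewrite ger0_norm // -[X in _ <= X]mulr1 ler_wpM2l //.
by rewrite -[1]mulr1 ler_pM ?normr_ge0 ?vnorm_ge0.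
Qed.

End PrincipalAngleDistance.

Section Tilt.
Variables (R : realType) (d k : nat).

Definition tilt (E : 'M[R]_(d, k)) (f : 'cV[R]_d) (u : 'cV[R]_k) (delta : R) :=
  E *m (1%:M + (Num.sqrt (1 - delta ^+ 2) - 1) *: (u *m u^T)) + delta *: (f *m u^T).

Variables (E : 'M[R]_(d, k)) (f : 'cV[R]_d) (u : 'cV[R]_k) (delta : R).
Hypotheses (hE : orthonormal_cols E) (fE : f^T *m E = 0).
Hypotheses (ff1 : dot f f = 1) (uu1 : dot u u = 1).

Lemma tilt_orthonormal : delta ^+ 2 <= 1 -> orthonormal_cols (tilt E f u delta).
Proof.
move=> delta_le1; set c := Num.sqrt (1 - delta ^+ 2) - 1.
have c_root : c + c + c * c + delta * delta = 0.
  have := sqr_sqrtr (a := 1 - delta ^+ 2); rewrite subr_ge0 => /(_ delta_le1).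
  by rewrite /c; lra.
set P := u *m u^T; set X := 1%:M + c *: P.
have PP : P *m P = P by rewrite /P mulmxA -(mulmxA u) trmx_mul_dot uu1 mulmx1.
have XT : X^T = X by rewrite [X^T]linearD /= linearZ /= tr_scalar_mx trmx_mul trmxK.
have XX : X *m X = 1%:M + (c + c + c * c) *: P.
  by rewrite mulmxDl !mulmxDr !mul1mx !mulmx1 -scalemxAl -scalemxAr PP scalerA !scalerDl !addrA.
have Ef : E^T *m f = 0 by rewrite -[f]trmxK -trmx_mul fE trmx0.
have -> : tilt E f u delta = E *m X + delta *: (f *m u^T) by [].
set B := _ + _.
have EB : E^T *m B = X.
  by rewrite mulmxDr mulmxA hE mul1mx -scalemxAr mulmxA Ef mul0mx scaler0 addr0.
have fB : f^T *m B = delta *: u^T.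
  by rewrite mulmxDr mulmxA fE mul0mx add0r -scalemxAr mulmxA trmx_mul_dot ff1 mul1mx.
have BT : B^T = X *m E^T + delta *: (u *m f^T).
  by rewrite [B^T]linearD /= linearZ /= !trmx_mul trmxK XT.
rewrite /orthonormal_cols BT mulmxDl -scalemxAl -!mulmxA EB fB XX -scalemxAr scalerA.
by rewrite -addrA -scalerDl c_root scale0r addr0.
Qed.

Lemma tilt_mul_orthogonal (w : 'cV[R]_k) : u^T *m w = 0 -> tilt E f u delta *m w = E *m w.
Proof.
move=> uw; have uuw c : (1%:M + c *: (u *m u^T)) *m w = w.
  by rewrite mulmxDl mul1mx -scalemxAl -mulmxA uw mulmx0 scaler0 addr0.
by rewrite /tilt mulmxDl -mulmxA uuw -scalemxAl -mulmxA uw mulmx0 scaler0 addr0.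
Qed.

Lemma trmx_tilt_mul : (tilt E f u delta)^T *m f = delta *: u.
Proof.
rewrite /tilt [(_ + _)^T]linearD /= linearZ /= !trmx_mul trmxK mulmxDl -!mulmxA.
rewrite -[f]trmxK -trmx_mul fE trmx0 !mulmx0 add0r trmxK.
by rewrite -scalemxAl -mulmxA trmx_mul_dot ff1 mulmx1.
Qed.

End Tilt.

(* Each update of B is a multiple of (B w - target) w^T, and [f] annihilates
   both B and the target. *)
Lemma dgd_B_orthogonal (R : realType) d k (alpha : R) (Bstar : 'M[R]_(d, k))
    (wbar : 'cV[R]_k) (B0 : 'M[R]_(d, k)) (w0 : 'cV[R]_k) (f : 'cV[R]_d) T :
  f^T *m B0 = 0 -> f^T *m (Bstar *m wbar) = 0 ->
  f^T *m dgd_B alpha Bstar wbar B0 w0 T = 0.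
Proof.
move=> fB0 ftarget; rewrite /dgd_B; elim: T => [|T IHT] //=.
case: (iter T _ _) IHT => B w /= fB.
rewrite mulmxBr -scalemxAr !mulmxA mulmxBr mulmxA fB mul0mx ftarget.
by rewrite subrr mul0mx scaler0 subrr.
Qed.

Unset Implicit Arguments.

Theorem proposition1 (R : realType) (d k M : nat) (hkd : (1 < k < d)%N)
  (hM : (0 < M)%N) (ws : 'I_M -> 'cV[R]_k)
  (B0 : 'M[R]_(d, k)) (hB0 : \rank B0 = k) (w0 : 'cV[R]_k)
  (delta0 : R) (hdelta : 0 < delta0 <= 1 / 2)
  (alpha : R) (halpha : 0 < alpha) (T : nat) :
  exists Bstar : 'M[R]_(d, k),
    [/\ orthonormal_cols Bstar,
        pa_dist B0 Bstar = delta0,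
        (exists v : 'cV[R]_k, Bstar *m avg_head ws = B0 *m v)
      & pa_dist (dgd_B alpha Bstar (avg_head ws) B0 w0 T) Bstar
          >= 7 / 10 * delta0].
Proof.
case/andP: hkd => k_gt1 k_lt_d; case/andP: hdelta => delta_gt0 delta_le.
set wbar := avg_head ws.
have rank_B0_lt : (\rank B0 < d)%N by rewrite hB0.
have [f [ff1 fB0]] := exists_unit_orthogonal rank_B0_lt.
have [u [uu1 uw]] :=
  exists_unit_orthogonal (leq_ltn_trans (rank_leq_col wbar) k_gt1).
have [G hE] := exists_orthonormal_col_basis hB0.
have fE : f^T *m (B0 *m G) = 0 by rewrite mulmxA fB0 mul0mx.
set Bstar := tilt (B0 *m G) f u delta0.
have hBstar : orthonormal_cols Bstar by apply: tilt_orthonormal => //; apply: exprn_ile1; lra.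
have Bstar_f : Bstar^T *m f = delta0 *: u by apply: trmx_tilt_mul.
have Bstar_wbar : Bstar *m wbar = B0 *m (G *m wbar).
  by rewrite tilt_mul_orthogonal // mulmxA.
have fBT : f^T *m dgd_B alpha Bstar wbar B0 w0 T = 0.
  by apply: dgd_B_orthogonal; rewrite // Bstar_wbar mulmxA fB0 mul0mx.
exists Bstar; split => //.
- apply/le_anti/andP; split; last exact: pa_dist_ge Bstar_f.
  by apply: pa_dist_le ff1 uu1 _ => //; [apply: ltW | rewrite /Bstar /tilt -mulmxA].
- by exists (G *m wbar).
- by apply: le_trans _ (pa_dist_ge hBstar fBT ff1 uu1 Bstar_f); lra.
Qed.
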